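(* Let $p\in(0,1)$, $d\ge2$ and $N\ge1$ be integers (with $p$ real), $t\in\mathbb{Z}_{\ge0}$, and $y_i=-d(i-1)$, $i=1,\dots,N$. For integers $k\ge0$ and $x\in\mathbb{Z}$ let $$F_{-k}(x,t)=(1-p)^t\frac{(-1)^k}{2\pi i}\oint_{\Gamma_0}\frac{dw}{w}\Big(1+\frac{p}{1-p}w\Big)^t\frac{(1-w)^k}{w^{x+k}},$$ and for $1\le n\le N$, $0\le k\le n-1$, let $\Psi^n_k(x)=(-1)^kF_{-k}(x-y_{n-k},t)$. Put $z=x+d(n-1)$. Then $$\Psi^n_k(x)=\frac{(-1)^k}{2\pi i}\oint_{\Gamma_0}\frac{dw}{w^{z+1}}(1+p(w-1))^t\big((w-1)w^{d-1}\big)^k,$$ and the functions $$\Phi^n_k(x)=\frac{(-1)^k}{2\pi i}\oint_{\Gamma_0}\frac{dv}{v}\,\frac{1+dv}{(1+pv)^t}\,\frac{(1+v)^{z-1}}{(v(1+v)^{d-1})^k},\qquad k=0,\dots,n-1,$$ are polynomials in $x$ of degree at most $n-1$ satisfying $\sum_{x\in\mathbb{Z}}\Phi^n_j(x)\Psi^n_k(x)=\delta_{j,k}$ for $0\le j,k\le n-1$.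
   Context: $\Gamma_0$ denotes any anticlockwise simple loop enclosing only the pole at $0$ of the respective integrand (in particular not enclosing $w=1$, $v=-1$, or $v=-1/p$). *)

(* Contour integrals (1/2πi)∮_{Γ_0} around the origin, where
   Γ_0 encloses only the pole at 0, are residues at 0; we define them for
   rational integrands P(w) / (Q(w) w^m) with Q(0) <> 0 as the (m-1)-th
   Taylor coefficient at 0 of the analytic function P/Q. *)
From mathcomp Require Import all_boot all_order all_algebra.
From mathcomp Require Import reals.
Set Implicit Arguments. Unset Strict Implicit. Unset Printing Implicit Defensive.
Import Order.TTheory GRing.Theory Num.Theory.
Local Open Scope ring_scope.

Section Residue.
Variable R : fieldType.

(* [sinv Q n] : the truncation to degree n of the power series 1/Q(w),
   (valid when Q`_0 <> 0): each step fixes the coefficient of w^(n+1)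
   so that Q * S = 1 + O(w^(n+2)). *)
Fixpoint sinv (Q : {poly R}) (n : nat) : {poly R} :=
  match n with
  | 0 => (Q`_0)^-1%:P
  | n'.+1 => let S := sinv Q n' in
             S - ((Q * S)`_n'.+1 / Q`_0) *: 'X ^+ n'.+1
  end.

(* res0 P Q m = (1/(2 pi i)) \oint_{Γ_0} P(w) / (Q(w) w^m) dw
   (for Q(0) <> 0), i.e. the residue at 0 = coefficient of w^(m-1) in P/Q. *)
Definition res0 (P Q : {poly R}) (m : int) : R :=
  match m with
  | Posz j.+1 => (P * sinv Q j)`_j
  | _ => 0
  end.

Definition zpos (e : int) : nat := if e is Posz m then m else 0%N.
Definition zneg (e : int) : nat := if e is Negz m then m.+1 else 0%N.

Definition yy (d i : nat) : int := - ((d * (i - 1))%N)%:Z.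

Definition Fm (p : R) (k : nat) (x : int) (t : nat) : R :=
  (1 - p) ^+ t * (-1) ^+ k *
  res0 ((1 + (p / (1 - p)) *: 'X) ^+ t * (1 - 'X) ^+ k) 1 (x + k%:Z + 1).

Definition Psi (p : R) (d t n k : nat) (x : int) : R :=
  (-1) ^+ k * Fm p k (x - yy d (n - k)) t.

Definition zz (d n : nat) (x : int) : int := x + ((d * (n - 1))%N)%:Z.

Definition PsiInt (p : R) (d t n k : nat) (x : int) : R :=
  (-1) ^+ k *
  res0 ((1 + p *: ('X - 1)) ^+ t * (('X - 1) * 'X ^+ (d - 1)) ^+ k) 1
       (zz d n x + 1).

(* Phi^n_k(x) = (-1)^k/(2πi) ∮ dv/v (1+dv)/(1+pv)^t (1+v)^(z-1)/(v(1+v)^(d-1))^k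
   written as (1+dv)(1+v)^{(z-1)_+} / ((1+pv)^t (1+v)^{(z-1)_- + (d-1)k} v^(k+1)) *)
Definition Phi (p : R) (d t n k : nat) (x : int) : R :=
  (-1) ^+ k *
  res0 ((1 + d%:R *: 'X) * (1 + 'X) ^+ zpos (zz d n x - 1))
       ((1 + p *: 'X) ^+ t * (1 + 'X) ^+ (zneg (zz d n x - 1) + (d - 1) * k))
       (k%:Z + 1).

Definition sumZ (f : int -> R) (s : R) : Prop :=
  exists M : nat, (forall x : int, (M < absz x)%N -> f x = 0) /\
    \sum_(i < (2 * M).+1) f (i%:Z - M%:Z) = s.

End Residue.

From mathcomp Require Import all_boot all_order all_algebra.
From mathcomp Require Import reals.
From mathcomp Require Import zify ring.
Import Order.TTheory GRing.Theory Num.Theory.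
Local Open Scope ring_scope.

(* All the contour integrals are residues at 0, i.e. Taylor coefficients.
   Psi^n_k(x) is the coefficient of w^(x + d(n-k-1) + k) in
   C_k(w) = (1 - p + p w)^t (1 - w)^k, and so is its second integral form
   once the factor w^((d-1)k) is pulled out.  Phi^n_k(x) is (-1)^k times the
   coefficient of v^k in (1 + d v) (1 + p v)^-t (1 + v)^(z-1-(d-1)k); the
   coefficients of (1 + v)^m are binomial polynomials in m, hence Phi^n_k is a
   polynomial in x of degree at most k.  In the sum over x, the coefficients
   of C_k recombine the powers (1 + v)^s into C_k(1 + v) = (1 + p v)^t (-v)^k,
   which cancels the denominator; what is left is (-1)^j times the coefficient
   of v^(j-k) in (1 + d v) (1 + v)^(-(d-1)(j-k)-1): zero for j < k, one for
   j = k, and zero for j > k by a Lagrange-inversion type identity. *)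

Section TruncatedSeries.
Context {R : nzRingType}.
Implicit Types P Q : {poly R}.

Definition eqmodXn (K : nat) P Q := forall i, (i < K)%N -> P`_i = Q`_i.

Lemma eqmodXn_refl K P : eqmodXn K P P. Proof. by []. Qed.

Lemma eqmodXn_sym {K P Q} : eqmodXn K P Q -> eqmodXn K Q P.
Proof. by move=> PQ i /PQ. Qed.

Lemma eqmodXn_trans {K} Q {P S} : eqmodXn K P Q -> eqmodXn K Q S -> eqmodXn K P S.
Proof. by move=> PQ QS i iK; rewrite PQ // QS. Qed.

Lemma eqmodXnD {K P Q P' Q'} :
  eqmodXn K P Q -> eqmodXn K P' Q' -> eqmodXn K (P + P') (Q + Q').
Proof. by move=> PQ PQ' i iK; rewrite !coefD PQ // PQ'. Qed.

Lemma eqmodXnZ {K} c {P Q} : eqmodXn K P Q -> eqmodXn K (c *: P) (c *: Q).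
Proof. by move=> PQ i iK; rewrite !coefZ PQ. Qed.

Lemma eqmodXnM {K P Q P' Q'} :
  eqmodXn K P Q -> eqmodXn K P' Q' -> eqmodXn K (P * P') (Q * Q').
Proof.
move=> PQ PQ' i iK; rewrite !coefM; apply: eq_bigr => j _.
rewrite PQ ?PQ' //; apply: leq_ltn_trans iK; first exact: leq_subr.
by rewrite -ltnS.
Qed.

Lemma eqmodXnMl {K P Q} S : eqmodXn K P Q -> eqmodXn K (S * P) (S * Q).
Proof. exact/eqmodXnM/eqmodXn_refl. Qed.

Lemma eqmodXn_sum K (I : Type) (r : seq I) (F G : I -> {poly R}) :
  (forall i, eqmodXn K (F i) (G i)) ->
  eqmodXn K (\sum_(i <- r) F i) (\sum_(i <- r) G i).
Proof.
move=> FG; elim: r => [|a r IH]; first by rewrite !big_nil.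
by rewrite !big_cons; apply: eqmodXnD.
Qed.

End TruncatedSeries.

Section Residue.
Context {R : fieldType}.
Implicit Types P Q S : {poly R}.

Lemma mul_sinv Q j : Q`_0 != 0 -> eqmodXn j.+1 (Q * sinv Q j) 1.
Proof.
move=> Q0; elim: j => [|j IH] i.
  by rewrite ltnS leqn0 => /eqP ->; rewrite coefMC coef1 mulfV.
rewrite /= mulrBr coefB -scalerAr coefZ coefMXn.
case: (ltnP i j.+1) => [ij _|ji ij]; first by rewrite mulr0 subr0 IH.
have -> : i = j.+1 by apply/eqP; rewrite eqn_leq ji -ltnS ij.
by rewrite subnn divfK // subrr coef1.
Qed.

Lemma sinv_unique {Q S j} :
  Q`_0 != 0 -> eqmodXn j.+1 (Q * S) 1 -> eqmodXn j.+1 (sinv Q j) S.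
Proof.
move=> Q0 QS; apply: (eqmodXn_trans (sinv Q j * (Q * S))).
  by rewrite -[X in eqmodXn _ X]mulr1; apply/eqmodXnMl/eqmodXn_sym.
rewrite mulrA [sinv Q j * Q]mulrC -[X in eqmodXn _ _ X]mul1r.
by apply: eqmodXnM; [exact: mul_sinv | exact: eqmodXn_refl].
Qed.

Lemma res0E P Q S j : Q`_0 != 0 -> eqmodXn j.+1 (Q * S) 1 ->
  res0 P Q (Posz j.+1) = (P * S)`_j.
Proof. by move=> Q0 QS; rewrite /= (eqmodXnMl P (sinv_unique Q0 QS)). Qed.

Definition coefz P (m : int) : R := if m is Posz j then P`_j else 0.

Lemma coefz_neg P m : m < 0 -> coefz P m = 0.
Proof. by case: m. Qed.

Lemma coefzZ c P m : c * coefz P m = coefz (c *: P) m.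
Proof. by case: m => [j|j] /=; rewrite ?coefZ ?mulr0. Qed.

Lemma coefzMXn P e m : coefz (P * 'X^e) m = coefz P (m - e%:Z).
Proof.
case: m => [j|j]; last by rewrite /= coefz_neg // NegzE; lia.
rewrite /= coefMXn; case: ltnP => je; first by rewrite coefz_neg //; lia.
by have -> : Posz j - Posz e = Posz (j - e) by lia.
Qed.

Lemma res0_poly P m : res0 P 1 (m + 1) = coefz P m.
Proof.
have sinv1 j : sinv (1 : {poly R}) j = 1.
  elim: j => [|j IH] /=; first by rewrite coef1 invr1.
  by rewrite IH mulr1 coef1 mul0r scale0r subr0.
case: m => [j|j]; first by rewrite -PoszD addn1 /= sinv1 mulr1.
have : Negz j + 1 <= 0 by rewrite NegzE; lia.
by case: (Negz j + 1) => [[|l]|l].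
Qed.

End Residue.

Section BinomialSeries.
Context {R : numFieldType}.
Implicit Types (m : int) (U V W : {poly R}).

Definition binz m (i : nat) : R := (\prod_(r < i) (m%:~R - r%:R)) / (i`!)%:R.

Definition binpoly (l : nat) : {poly R} :=
  (l`!)%:R^-1 *: \prod_(r < l) ('X - (r%:R)%:P).

Lemma binzE m l : binz m l = (binpoly l).[m%:~R].
Proof.
rewrite /binz /binpoly hornerZ horner_prod mulrC; congr (_ * _).
by apply: eq_bigr => r _; rewrite hornerXsubC.
Qed.

Lemma size_binpoly l : (size (binpoly l) <= l.+1)%N.
Proof.
apply: leq_trans (size_scale_leq _ _) _.
elim: l => [|l IH]; first by rewrite big_ord0 size_poly1.
rewrite big_ord_recr /=; apply: leq_trans (size_mul_leq _ _) _.
by rewrite size_XsubC addn2.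
Qed.

Lemma binz0 m : binz m 0 = 1.
Proof. by rewrite /binz big_ord0 fact0 divr1. Qed.

Lemma binzS m i : binz m i.+1 = binz m i * (m%:~R - i%:R) / i.+1%:R.
Proof.
rewrite /binz big_ord_recr /= factS natrM -natr1 mulrC.
have Si : i%:R + 1 != 0 :> R by rewrite natr1 pnatr_eq0.
have fi : (i`!)%:R != 0 :> R by rewrite pnatr_eq0 -lt0n fact_gt0.
by field; rewrite Si fi.
Qed.

Lemma binz0S i : binz 0 i.+1 = 0.
Proof. by rewrite /binz big_ord_recl /= subrr !mul0r. Qed.

Lemma binzDS m i : binz (m + 1) i.+1 = binz m i.+1 + binz m i.
Proof.
elim: i => [|i IH]; first by rewrite !binzS !binz0 intrD; field.
rewrite binzS IH (binzS m i.+1) (binzS m i) intrD -!natr1.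
have Si : i%:R + 1 != 0 :> R by rewrite natr1 pnatr_eq0.
have SSi : i%:R + 1 + 1 != 0 :> R by rewrite !natr1 pnatr_eq0.
by field; rewrite Si SSi.
Qed.

(* (1 + X)^m modulo X^K, for any integer m *)
Definition binser (K : nat) m : {poly R} := \poly_(i < K) binz m i.

Lemma binser_mulX1 K m : eqmodXn K (binser K m * (1 + 'X)) (binser K (m + 1)).
Proof.
move=> i iK; rewrite mulrDr mulr1 coefD coefMX !coef_poly iK.
case: i iK => [|i] iK /=; first by rewrite !binz0 addr0.
by rewrite (ltnW iK) binzDS.
Qed.

Lemma binser_mulX1n K a m :
  eqmodXn K (binser K m * (1 + 'X) ^+ a) (binser K (m + a%:Z)).
Proof.
elim: a m => [|a IH] m; first by rewrite expr0 mulr1 addr0.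
rewrite exprS mulrA; apply: (eqmodXn_trans (binser K (m + 1) * (1 + 'X) ^+ a)).
  exact/eqmodXnM/eqmodXn_refl/binser_mulX1.
have -> : m + a.+1%:Z = m + 1 + a%:Z by lia.
exact: IH.
Qed.

Lemma binser_inv K b : eqmodXn K ((1 + 'X) ^+ b * binser K (- b%:Z)) 1.
Proof.
rewrite mulrC; apply: (eqmodXn_trans _ (binser_mulX1n K b _)).
rewrite addNr => i iK; rewrite coef_poly iK coef1.
by case: i iK => [|i] _; rewrite ?binz0 ?binz0S.
Qed.

Lemma coef_mul_binser_poly W k : exists P : {poly R}, (size P <= k.+1)%N /\
  forall m, (W * binser k.+1 m)`_k = P.[m%:~R].
Proof.
exists (\sum_(i < k.+1) W`_i *: binpoly (k - i)); split.
  apply: (big_ind (fun P : {poly R} => size P <= k.+1)%N).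
  - by rewrite size_poly0.
  - by move=> P Q sP sQ; apply: leq_trans (size_polyD _ _) _; rewrite geq_max sP.
  - move=> i _; apply: leq_trans (size_scale_leq _ _) _.
    by apply: leq_trans (size_binpoly _) _; rewrite ltnS leq_subr.
move=> m; rewrite coefM horner_sum; apply: eq_bigr => i _.
by rewrite hornerZ coef_poly ltnS leq_subr binzE.
Qed.

Lemma res0_binser U V (a b k : nat) : V`_0 != 0 ->
  res0 (U * (1 + 'X) ^+ a) (V * (1 + 'X) ^+ b) (Posz k.+1) =
  (U * sinv V k * binser k.+1 (a%:Z - b%:Z))`_k.
Proof.
move=> V0; rewrite (@res0E _ _ _ (sinv V k * binser k.+1 (- b%:Z))).
- have -> : U * (1 + 'X) ^+ a * (sinv V k * binser k.+1 (- b%:Z)) =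
            U * sinv V k * (binser k.+1 (- b%:Z) * (1 + 'X) ^+ a) by ring.
  by rewrite (eqmodXnMl _ (binser_mulX1n _ _ _)) // addrC.
- by rewrite -horner_coef0 hornerM horner_exp !hornerE horner_coef0 expr1n mulr1.
- have -> : V * (1 + 'X) ^+ b * (sinv V k * binser k.+1 (- b%:Z)) =
            V * sinv V k * ((1 + 'X) ^+ b * binser k.+1 (- b%:Z)) by ring.
  rewrite -[X in eqmodXn _ _ X]mulr1.
  by apply: eqmodXnM; [exact: mul_sinv | exact: binser_inv].
Qed.

Lemma sum_coef_binser K (C : {poly R}) W e :
  eqmodXn K (\sum_(s < size C) C`_s *: (W * binser K (s%:Z + e)))
            (W * binser K e * (C \Po (1 + 'X))).
Proof.
rewrite comp_polyE mulr_sumr; apply: eqmodXn_sum => s.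
rewrite -scalerAr -mulrA; apply/eqmodXnZ/eqmodXnMl/eqmodXn_sym.
by rewrite [_ + e]addrC; apply: binser_mulX1n.
Qed.

(* For e = -(d-1)(l+1) - 1 one has e - l = -d (l+1), so binz e (l+1) = -d binz e l. *)
Lemma coef_binser_vanish (d l K : nat) : (0 < d)%N -> (l.+1 < K)%N ->
  ((1 + d%:R *: 'X) * binser K ((d - 1)%:Z * - l.+1%:Z - 1))`_l.+1 = 0.
Proof.
move=> d_gt0 lK; rewrite mulrDl mul1r coefD -scalerAl coefZ coefXM !coef_poly /=.
rewrite lK (ltn_trans _ lK) // binzS intrB intrM intrN -!pmulrn natrB // -!natr1.
have Sl : l%:R + 1 != 0 :> R by rewrite natr1 pnatr_eq0.
by field.
Qed.

Lemma coef_binser_delta (d j k : nat) : (0 < d)%N ->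
  (-1) ^+ j * ((1 + d%:R *: 'X) * binser j.+1 ((d - 1)%:Z * (k%:Z - j%:Z) - 1) *
    (- 'X) ^+ k)`_j = (j == k)%:R.
Proof.
move=> d_gt0; rewrite -scaleN1r exprZn -scalerAr coefZ coefMXn mulrA.
case: (ltngtP j k) => [_|kj|<-]; first by rewrite mulr0.
- have [l ->] : exists l, j = (k + l.+1)%N by exists (j - k).-1; lia.
  have -> : k%:Z - (k + l.+1)%N%:Z = - l.+1%:Z by lia.
  by rewrite addKn coef_binser_vanish ?mulr0 // ltnS leq_addl.
- rewrite subnn subrr mulr0 sub0r -expr2 sqrr_sign mul1r.
  by rewrite mulrDl mul1r coefD -scalerAl coefZ coefXM !coef_poly binz0 mulr0 addr0.
Qed.

End BinomialSeries.

Lemma sumZ_shift {R : fieldType} (f : int -> R) (off T : nat) :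
  (forall x, f x != 0 -> 0 <= x + off%:Z < T%:Z) ->
  sumZ f (\sum_(s < T) f (s%:Z - off%:Z)).
Proof.
move=> supp; have f0 x : ~~ (0 <= x + off%:Z < T%:Z) -> f x = 0.
  by move=> hx; apply/eqP; apply: contraNT hx; apply: supp.
exists (T + off)%N; split=> [x xM|]; first by apply: f0; lia.
pose F i := f (i%:Z - (T + off)%N%:Z).
have below : \sum_(0 <= i < T) F i = 0.
  by rewrite big_nat big1 // => i iT; apply: f0; lia.
have above : \sum_(T + T <= i < (2 * (T + off)).+1) F i = 0.
  by rewrite big_nat big1 // => i iT; apply: f0; lia.
rewrite -(big_mkord xpredT F) (big_cat_nat _ (n := T)) //= ?below ?add0r; last by lia.
rewrite (big_cat_nat _ (n := T + T)) ?leq_addr //= ?above ?addr0; last by lia.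
rewrite -{1}(add0n T) big_addn addnK big_mkord; apply: eq_bigr => i _.
by rewrite /F; congr f; lia.
Qed.

Section Kernels.
Context {R : numFieldType}.
Variables (p : R) (d t n : nat).
Hypotheses (p_neq1 : p != 1) (d_gt0 : (0 < d)%N).

Definition psi_poly (k : nat) : {poly R} := (1 + p *: ('X - 1)) ^+ t * (1 - 'X) ^+ k.

Definition psi_offset (k : nat) : nat := d * (n - k - 1) + k.

Lemma Psi_coef k x : Psi p d t n k x = coefz (psi_poly k) (x + (psi_offset k)%:Z).
Proof.
rewrite /Psi /Fm res0_poly -mulrA mulrCA (mulrA ((-1) ^+ k)) -expr2 sqrr_sign mul1r.
rewrite coefzZ scalerAl -exprZn.
have -> : (1 - p) *: (1 + (p / (1 - p)) *: 'X) = 1 + p *: ('X - 1) :> {poly R}.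
  have p1 : (1 - p) * (p / (1 - p)) = p by field; rewrite subr_eq0 eq_sym.
  by rewrite scalerDr scalerA p1 scalerBr !alg_polyC polyCB polyC1; ring.
by rewrite /psi_poly /yy /psi_offset; congr coefz; lia.
Qed.

Lemma PsiInt_coef k x : (k < n)%N ->
  PsiInt p d t n k x = coefz (psi_poly k) (x + (psi_offset k)%:Z).
Proof.
move=> kn; rewrite /PsiInt res0_poly coefzZ exprMn -exprM mulrA scalerAl.
rewrite coefzMXn scalerAr -exprZn scaleN1r opprB /zz /psi_offset.
by rewrite /psi_poly; congr coefz; nia.
Qed.

Lemma Psi_PsiInt k x : (k < n)%N -> Psi p d t n k x = PsiInt p d t n k x.
Proof. by move=> kn; rewrite Psi_coef PsiInt_coef. Qed.

Definition phi_weight (k : nat) : {poly R} :=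
  (1 + d%:R *: 'X) * sinv ((1 + p *: 'X) ^+ t) k.

Lemma Phi_binser k x : Phi p d t n k x =
  (-1) ^+ k * (phi_weight k * binser k.+1 (zz d n x - 1 - ((d - 1) * k)%N%:Z))`_k.
Proof.
have zposneg e : (zpos e)%:Z - (zneg e)%:Z = e.
  by case: e => [m|m] /=; rewrite ?subr0 // NegzE sub0r.
rewrite /Phi -PoszD addn1 res0_binser; first by rewrite PoszD opprD addrA zposneg.
by rewrite -horner_coef0 horner_exp !hornerE expr1n oner_neq0.
Qed.

Lemma Phi_poly k : (k < n)%N -> exists P : {poly R}, (size P <= n)%N /\
  forall x : int, Phi p d t n k x = P.[x%:~R].
Proof.
move=> kn; have [P [sizeP PE]] := coef_mul_binser_poly (phi_weight k) k.
pose c : int := (d * (n - 1))%N%:Z - 1 - ((d - 1) * k)%N%:Z.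
exists ((-1) ^+ k *: (P \Po ('X + (c%:~R)%:P))); split.
  apply: leq_trans (size_scale_leq _ _) _; apply: leq_trans (size_comp_poly_leq _ _) _.
  by rewrite size_XaddC muln1; move: sizeP; case: (size P) => /=; lia.
move=> x; rewrite Phi_binser PE hornerZ horner_comp !hornerE -intrD.
by congr (_ * P.[_%:~R]); rewrite /zz /c; lia.
Qed.

Lemma psi_poly_comp k : psi_poly k \Po (1 + 'X) = (1 + p *: 'X) ^+ t * (- 'X) ^+ k.
Proof.
rewrite /psi_poly !(rmorphM, rmorphXn, rmorphD, rmorphB, rmorph1) /=.
rewrite comp_polyZ !(rmorphB, rmorphN, rmorph1) /= comp_polyX.
by rewrite addrAC subrr add0r opprD addrA subrr add0r.
Qed.

Lemma sum_Phi_psi_poly j k : (j < n)%N -> (k < n)%N ->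
  \sum_(s < size (psi_poly k))
     Phi p d t n j (s%:Z - (psi_offset k)%:Z) * (psi_poly k)`_s = (j == k)%:R.
Proof.
move=> jn kn; set C := psi_poly k; set V : {poly R} := (1 + p *: 'X) ^+ t.
pose e : int := (d - 1)%:Z * (k%:Z - j%:Z) - 1.
have zE (s : nat) : zz d n (s%:Z - (psi_offset k)%:Z) - 1 - ((d - 1) * j)%N%:Z = s%:Z + e.
  by rewrite /zz /psi_offset /e; nia.
have -> : \sum_(s < size C) Phi p d t n j (s%:Z - (psi_offset k)%:Z) * C`_s =
    (-1) ^+ j * (\sum_(s < size C) C`_s *: (phi_weight j * binser j.+1 (s%:Z + e)))`_j.
  rewrite coef_sum mulr_sumr; apply: eq_bigr => s _.
  by rewrite Phi_binser zE coefZ mulrAC mulrA.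
rewrite (sum_coef_binser j.+1 C (phi_weight j) e) // psi_poly_comp.
have -> : phi_weight j * binser j.+1 e * (V * (- 'X) ^+ k) =
    V * sinv V j * ((1 + d%:R *: 'X) * binser j.+1 e * (- 'X) ^+ k).
  by rewrite /phi_weight; ring.
rewrite (eqmodXnM (mul_sinv V j _) (eqmodXn_refl _ _)) ?mul1r ?coef_binser_delta //.
by rewrite -horner_coef0 horner_exp !hornerE expr1n oner_neq0.
Qed.

Lemma Phi_Psi_biorthogonal j k : (j < n)%N -> (k < n)%N ->
  sumZ (fun x => Phi p d t n j x * Psi p d t n k x) (if j == k then 1 else 0).
Proof.
move=> jn kn; have -> : (if j == k then 1 else 0) = (j == k)%:R :> R by case: eqP.
rewrite -sum_Phi_psi_poly //.
rewrite (eq_bigr (fun s : 'I__ => Phi p d t n j (s%:Z - (psi_offset k)%:Z) *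
                                Psi p d t n k (s%:Z - (psi_offset k)%:Z))) => [|s _].
  apply: sumZ_shift => x; rewrite Psi_coef.
  case: (x + _) => [s|s] /=; last by rewrite mulr0 eqxx.
  rewrite ltz_nat; apply: contraNT; rewrite -leqNgt => sC.
  by rewrite nth_default ?mulr0.
by rewrite Psi_coef subrK.
Qed.

End Kernels.

Theorem lemma4p1 (R : realType) (p : R) (d N t : nat) :
  0 < p < 1 -> (2 <= d)%N -> (1 <= N)%N ->
  forall n : nat, (1 <= n <= N)%N ->
  (forall (k : nat) (x : int), (k <= n - 1)%N ->
     Psi p d t n k x = PsiInt p d t n k x) /\
  (forall k : nat, (k <= n - 1)%N ->
     exists P : {poly R}, (size P <= n)%N /\
       forall x : int, Phi p d t n k x = P.[x%:~R]) /\
  (forall j k : nat, (j <= n - 1)%N -> (k <= n - 1)%N ->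
     sumZ (fun x : int => Phi p d t n j x * Psi p d t n k x)
          (if j == k then 1 else 0)).
Proof.
move=> /andP [_ p_lt1] d_ge2 _ n /andP [n_gt0 _].
have p_neq1 : p != 1 by rewrite lt_eqF.
have d_gt0 : (0 < d)%N by apply: ltnW.
have lt_n m : (m <= n - 1)%N -> (m < n)%N by lia.
split; [|split].
- by move=> k x /lt_n; apply: Psi_PsiInt.
- by move=> k /lt_n; apply: Phi_poly.
- by move=> j k /lt_n jn /lt_n kn; apply: Phi_Psi_biorthogonal.
Qed.
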